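(* Let $G$ be a finite group, $N$ a commutative monoid in sets, and let $\mathscr{D}=\mathbf{Set}(G,N)^{\mathrm{disc}}$ be the discrete $G$-category (no nonidentity morphisms) whose objects are the functions $f:G\to N$, with $G$-action $(g\cdot f)(x)=f(xg)$. If there is a nonequivariant category $\mathscr{C}$ such that $\mathscr{D}$ is $G$-equivalent to $\mathbf{Fun}(\mathbb{T}G,\mathscr{C})$, then the $G$-action on $\mathscr{D}$ is trivial.
   Context: The translation category $\mathbb{T}G$ has object set $G$ and a unique morphism $yx^{-1}:x\to y$ for all $x,y\in G$; right multiplication by $g$ gives functors $(-)g:\mathbb{T}G\to\mathbb{T}G$, making $\mathbb{T}G$ a right $G$-category. For a category $\mathscr{C}$ (trivial action), $\mathbf{Fun}(\mathbb{T}G,\mathscr{C})$ is the category of functors $\mathbb{T}G\to\mathscr{C}$ and natural transformations, with left $G$-action by precomposition: $(gC)_x=C_{xg}$, $(g\eta)_x=\eta_{xg}$. A $G$-equivalence is a $G$-equivariant functor $\Phi:\mathbf{Fun}(\mathbb{T}G,\mathscr{C})\to\mathscr{D}$ that is an equivalence of categories. *)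

From HB Require Import structures.
From mathcomp Require Import all_boot all_fingroup.
From Stdlib Require Import ProofIrrelevance FunctionalExtensionality.

Set Implicit Arguments.
Unset Strict Implicit.
Unset Printing Implicit Defensive.

Local Open Scope group_scope.

Record Category := {
  Ob :> Type;
  Hom : Ob -> Ob -> Type;
  idm : forall a, Hom a a;
  comp : forall a b c, Hom b c -> Hom a b -> Hom a c;
  comp_id_l : forall a b (f : Hom a b), comp (idm b) f = f;
  comp_id_r : forall a b (f : Hom a b), comp f (idm a) = f;
  comp_assoc : forall a b c d (h : Hom c d) (g : Hom b c) (f : Hom a b),
      comp h (comp g f) = comp (comp h g) f }.

Arguments Hom {_} a b.
Arguments idm {_} a.
Arguments comp {_ a b c} g f.

Record Functor (C D : Category) := {
  fobj :> C -> D;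
  fmap : forall a b, Hom a b -> Hom (fobj a) (fobj b);
  fmap_id : forall a, fmap (idm a) = idm (fobj a);
  fmap_comp : forall a b c (g : Hom b c) (f : Hom a b),
      fmap (comp g f) = comp (fmap g) (fmap f) }.

Arguments fmap {C D} _ {a b} f.

Record NatTrans (C D : Category) (F G : Functor C D) := {
  nt_at :> forall a, Hom (F a) (G a);
  naturality : forall a b (f : Hom a b),
      comp (nt_at b) (fmap F f) = comp (fmap G f) (nt_at a) }.

Lemma nt_eq (C D : Category) (F G : Functor C D) (s t : NatTrans F G) :
  (forall a, s a = t a) -> s = t.
Proof.
case: s => s ns; case: t => t nt /= H.
have E : s = t by apply: functional_extensionality_dep.
subst t; f_equal; apply: proof_irrelevance.
Qed.

Definition idF (C : Category) : Functor C C.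
Proof.
refine (@Build_Functor C C (fun a => a) (fun a b f => f) _ _); by [].
Defined.

Definition compF (C D E : Category) (G : Functor D E) (F : Functor C D) :
  Functor C E.
Proof.
refine (@Build_Functor C E (fun a => G (F a)) (fun a b f => fmap G (fmap F f)) _ _).
- by move=> a; rewrite !fmap_id.
- by move=> a b c g f; rewrite !fmap_comp.
Defined.

Definition idNT (C D : Category) (F : Functor C D) : NatTrans F F.
Proof.
refine (@Build_NatTrans C D F F (fun a => idm (F a)) _).
by move=> a b f; rewrite comp_id_l comp_id_r.
Defined.

Definition compNT (C D : Category) (F G H : Functor C D)
  (t : NatTrans G H) (s : NatTrans F G) : NatTrans F H.
Proof.
refine (@Build_NatTrans C D F H (fun a => comp (t a) (s a)) _).
move=> a b f; rewrite -comp_assoc naturality comp_assoc naturality.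
by rewrite comp_assoc.
Defined.

Definition FunCat (C D : Category) : Category.
Proof.
refine (@Build_Category (Functor C D) (@NatTrans C D) (@idNT C D)
          (@compNT C D) _ _ _).
- by move=> F G s; apply: nt_eq => a /=; rewrite comp_id_l.
- by move=> F G s; apply: nt_eq => a /=; rewrite comp_id_r.
- by move=> F G H K u t s; apply: nt_eq => a /=; rewrite comp_assoc.
Defined.

Definition NatIso (C D : Category) (F G : Functor C D) : Prop :=
  exists (s : NatTrans F G) (t : NatTrans G F),
    (forall a, comp (t a) (s a) = idm (F a)) /\
    (forall a, comp (s a) (t a) = idm (G a)).

Definition IsEquivalence (C D : Category) (F : Functor C D) : Prop :=
  exists (G : Functor D C),
    NatIso (compF G F) (idF C) /\ NatIso (compF F G) (idF D).

Record GActData (gT : finGroupType) (C : Category) := {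
  actO : gT -> C -> C;
  actH : forall (g : gT) (a b : C), Hom a b -> Hom (actO g a) (actO g b) }.

Arguments actO {gT C} _ g a.
Arguments actH {gT C} _ g {a b} f.

Definition cast_hom (C : Category) (a a' b b' : C) (e1 : a = a') (e2 : b = b')
  (f : Hom a b) : Hom a' b' :=
  match e1 in _ = a1, e2 in _ = b1 return Hom a1 b1 with
  | erefl, erefl => f end.

Definition Equivariant (gT : finGroupType) (C D : Category)
  (A : GActData gT C) (B : GActData gT D) (F : Functor C D) : Prop :=
  exists eO : forall g a, F (actO A g a) = actO B g (F a),
    forall g a b (f : Hom a b),
      cast_hom (eO g a) (eO g b) (fmap F (actH A g f)) = actH B g (fmap F f).

Definition GEquivalence (gT : finGroupType) (C D : Category)
  (A : GActData gT C) (B : GActData gT D) (F : Functor C D) : Prop :=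
  Equivariant A B F /\ IsEquivalence F.

(** * The translation category TG: objects gT, a unique morphism y x^-1 : x -> y *)
Definition THom (gT : finGroupType) (x y : gT) := {m : gT | m == y * x^-1}.

Lemma Tid_proof (gT : finGroupType) (x : gT) : (1 : gT) == x * x^-1.
Proof. by rewrite mulgV. Qed.

Lemma Tcomp_proof (gT : finGroupType) (x y z : gT) (g : THom y z) (f : THom x y) :
  val g * val f == z * x^-1.
Proof.
case: g f => m Hm [n Hn] /=.
by rewrite (eqP Hm) (eqP Hn) -mulgA mulKg.
Qed.

Definition TCat (gT : finGroupType) : Category.
Proof.
refine (@Build_Category gT (@THom gT)
          (fun x => exist _ 1 (Tid_proof x))
          (fun x y z g f => exist _ (val g * val f) (Tcomp_proof g f)) _ _ _).
- by move=> a b f; apply: val_inj => /=; rewrite mul1g.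
- by move=> a b f; apply: val_inj => /=; rewrite mulg1.
- by move=> a b c d h g f; apply: val_inj => /=; rewrite mulgA.
Defined.

Lemma rt_proof (gT : finGroupType) (g x y : gT) (m : THom x y) :
  val m == (y * g) * (x * g)^-1.
Proof. by case: m => m Hm /=; rewrite (eqP Hm) invMg mulgA mulgK. Qed.

Definition rtF (gT : finGroupType) (g : gT) : Functor (TCat gT) (TCat gT).
Proof.
refine (@Build_Functor (TCat gT) (TCat gT) (fun x => x * g)
          (fun x y m => exist _ (val m) (rt_proof g m)) _ _).
- by move=> a; apply: val_inj.
- by move=> a b c h f; apply: val_inj.
Defined.

Definition whiskerR (C : Category) (gT : finGroupType) (g : gT)
  (F G : Functor (TCat gT) C) (s : NatTrans F G) :
  NatTrans (compF F (rtF g)) (compF G (rtF g)).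
Proof.
refine (@Build_NatTrans (TCat gT) C (compF F (rtF g)) (compF G (rtF g))
          (fun x => s (x * g)) _).
by move=> a b f; exact: (naturality s (fmap (rtF g) f)).
Defined.

Definition FunTG_act (gT : finGroupType) (C : Category) :
  GActData gT (FunCat (TCat gT) C) :=
  @Build_GActData gT (FunCat (TCat gT) C)
    (fun g F => compF F (rtF g))
    (fun g F G s => whiskerR g s).

Definition DiscCat (X : Type) : Category.
Proof.
refine (@Build_Category X (fun a b => a = b) (fun a => erefl a)
          (fun a b c (g : b = c) (f : a = b) => etrans f g) _ _ _);
  by move=> *; apply: proof_irrelevance.
Defined.

Definition SetGN_actO (gT : finGroupType) (N : Type) (g : gT) (f : gT -> N) :
  gT -> N := fun x => f (x * g).

Definition SetGN_act (gT : finGroupType) (N : Type) :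
  GActData gT (DiscCat (gT -> N)) :=
  @Build_GActData gT (DiscCat (gT -> N))
    (@SetGN_actO gT N)
    (fun g f f' (e : f = f') => congr1 (SetGN_actO g) e).

From HB Require Import structures.
From mathcomp Require Import all_boot all_fingroup.

(* For every functor F : TG -> C and every g, the arrows x -> x g of TG
   assemble into a natural transformation F => g F.  A functor into a discrete
   category identifies objects joined by a morphism, so an equivariant Phi
   satisfies g . Phi F = Phi (g F) = Phi F.  An equivalence onto a discrete
   category is surjective on objects, hence g fixes every object. *)

Set Implicit Arguments.
Unset Strict Implicit.
Unset Printing Implicit Defensive.

Local Open Scope group_scope.

Lemma THom_eq (gT : finGroupType) (x y : gT) (m n : THom x y) : m = n.
Proof.
apply: val_inj; case: m n => m Hm [n Hn] /=.
by rewrite (eqP Hm) (eqP Hn).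
Qed.

Definition shiftNT (gT : finGroupType) (C : Category) (g : gT)
  (F : Functor (TCat gT) C) : NatTrans F (compF F (rtF g)).
Proof.
refine (@Build_NatTrans (TCat gT) C F (compF F (rtF g))
  (fun x => fmap F (exist _ (x * g * x^-1) (eqxx _) : @Hom (TCat gT) x (x * g)))
  _).
move=> a b f /=.
by rewrite -!fmap_comp; congr (fmap F _); apply: THom_eq.
Defined.

Lemma disc_functor_shift_eq (gT : finGroupType) (C : Category) (X : Type)
  (Phi : Functor (FunCat (TCat gT) C) (DiscCat X)) (g : gT)
  (F : Functor (TCat gT) C) :
  Phi F = Phi (compF F (rtF g)).
Proof. exact (fmap Phi (shiftNT g F)). Qed.

Lemma equivalence_disc_surj (C : Category) (X : Type)
  (Phi : Functor C (DiscCat X)) :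
  IsEquivalence Phi -> forall x : X, exists a : C, Phi a = x.
Proof. by move=> [Psi [_ [s _]]] x; exists (Psi x); apply: (s x). Qed.

Lemma equivariant_disc_act_fixed (gT : finGroupType) (C : Category) (X : Type)
  (B : GActData gT (DiscCat X))
  (Phi : Functor (FunCat (TCat gT) C) (DiscCat X)) :
  Equivariant (FunTG_act gT C) B Phi ->
  forall (g : gT) (F : Functor (TCat gT) C), actO B g (Phi F) = Phi F.
Proof.
move=> [eO _] g F.
by rewrite -(eO g F) /=; symmetry; apply: disc_functor_shift_eq.
Qed.

Theorem proposition2p20 (gT : finGroupType) (N : Type) (idx : N)
  (op : Monoid.com_law idx) :
  (exists (C : Category)
          (Phi : Functor (FunCat (TCat gT) C) (DiscCat (gT -> N))),
      GEquivalence (FunTG_act gT C) (SetGN_act gT N) Phi) ->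
  forall (g : gT) (f : gT -> N), SetGN_actO g f = f.
Proof.
move=> [C [Phi [Phi_equivariant Phi_equivalence]]] g f.
have [F <-] := equivalence_disc_surj Phi_equivalence f.
exact: (equivariant_disc_act_fixed Phi_equivariant).
Qed.
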